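(* In $\mathbb{R}^3$ write $z=(z_1,\mathbf z_2)$ with $\mathbf z_2\in\mathbb{R}^2$. For $k\in\mathbb{N}$, $r>0$ let $C_{k,r}=[k,k+\tfrac14]\times D_r$, where $D_r\subset\mathbb{R}^2$ is the disc of radius $r$ centred at $0$. For $r\in(0,e^{-1})$ let $f(r)=\frac{1}{r|\ln r|\ln|\ln r|}$, and for $n\in\mathbb{N}$, $z\in\mathbb{R}^3$ let $V_n(z)=f\big(\tfrac{z_1}{25n}\big)\sum_{k=1}^n\mathbf 1_{C_{k,\sqrt{k/(25n)}}}(z)$ (and $V_n(z)=0$ off the union of these cylinders). Then $$\lim_{\varepsilon\to0^+}\ \sup_{x\in\mathbb{R}^3,\ n\in\mathbb{N}}\int_{|z-x|<\varepsilon}\frac{|V_n(z)|}{|z-x|}\,dz=0.$$ *)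

From mathcomp Require Import all_boot all_order all_algebra.
From mathcomp Require Import all_classical all_reals all_analysis.
Import Order.TTheory GRing.Theory Num.Theory.

Set Implicit Arguments.
Unset Strict Implicit.
Unset Printing Implicit Defensive.

Local Open Scope ring_scope.
Local Open Scope classical_set_scope.

(* Points of R^3 are triples z = (z1, z21, z22) : R * R * R, i.e.
   z.1.1 = z_1 and (z.1.2, z.2) = bold z_2 in R^2. *)

Definition leb3 (R : realType) :=
  ((@lebesgue_measure R \x @lebesgue_measure R) \x @lebesgue_measure R)%E.

Definition dist3 (R : realType) (z x : R * R * R) : R :=
  Num.sqrt ((z.1.1 - x.1.1) ^+ 2 + (z.1.2 - x.1.2) ^+ 2 + (z.2 - x.2) ^+ 2).

Definition f_fun (R : realType) (r : R) : R :=
  (r * `|ln r| * ln `|ln r|)^-1.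

Definition cyl (R : realType) (k : nat) (r : R) : set (R * R * R) :=
  [set z | k%:R <= z.1.1 <= k%:R + 4^-1 /\ z.1.2 ^+ 2 + z.2 ^+ 2 <= r ^+ 2].

Definition Vn (R : realType) (n : nat) (z : R * R * R) : R :=
  f_fun (z.1.1 / (25 * n%:R)) *
  \sum_(1 <= k < n.+1) \1_(cyl k (Num.sqrt (k%:R / (25 * n%:R)))) z.

Definition Kint (R : realType) (eps : R) (x : R * R * R) (n : nat) : \bar R :=
  (\int[@leb3 R]_(z in [set z | (dist3 z x < eps)%R])
      (`|Vn n z| / dist3 z x)%:E)%E.

Definition Ksup (R : realType) (eps : R) : \bar R :=
  ereal_sup [set y | exists (x : R * R * R) (n : nat), y = Kint eps x n].

(* Fix 0 < eps <= 1/16, a point x and n >= 1, and put a := x_1/(25n).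
   Near x (axial distance < 1/2) only the cylinders with k/(25n) <= z_1/(25n)
   and z_1/(25n) within a factor 2 of a matter; hence V_n vanishes on the
   eps-ball unless a > 0, is bounded there by F(a) := 2/(a M ln M) with
   M := -ln(min(2a, 1/20)), and is supported in the slab |z_2|, |z_3| <= sqrt(2a).
   The kernel is decomposed dyadically: with s_j := eps/2^j, on the ball
   1/|z - x| <= sum_j (2/s_j) 1_{B_j}(z), where B_j is the box of half-side
   s_j around x cut down to the slab, of volume <= 8 s_j min(s_j, sqrt(2a))^2.
   So the integral is at most 16 F(a) sum_j min(s_j, sqrt(2a))^2
   <= 16 F(a) (2aN + 4/3 s_N^2) for every level N, and a good choice of N
   (N = 0 when eps <= 2a, N ~ M otherwise) gives the bound
   B(eps) := 86 eps + 139/ln(-ln eps), uniform in x and n, which tends to 0. *)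
From mathcomp Require Import all_boot all_order all_algebra.
From mathcomp Require Import all_classical all_reals all_analysis.
From mathcomp Require Import lra ring.
Import Order.TTheory GRing.Theory Num.Theory.

Local Open Scope ring_scope.
Local Open Scope classical_set_scope.

Local Notation dyadic eps j := (eps * (2^-1) ^+ j).

Section DyadicKernel.
Context {R : realType}.
Implicit Types (eps d s rho F v : R) (x z : R * R * R).

Definition slab_box x s rho : set (R * R * R) :=
  (`[x.1.1 - s, x.1.1 + s] `*` (`[x.1.2 - s, x.1.2 + s] `&` `[- rho, rho]))
  `*` (`[x.2 - s, x.2 + s] `&` `[- rho, rho]).

Lemma slab_box_measurable x s rho : measurable (slab_box x s rho).
Proof.
apply: measurableX; first apply: measurableX.
- exact: measurable_itv.
- by apply: measurableI; exact: measurable_itv.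
- by apply: measurableI; exact: measurable_itv.
Qed.

Lemma lebesgue_itvI_le (c e a b : R) : a <= b ->
  (lebesgue_measure (`[a, b] `&` `[c, e]) <= (b - a)%:E)%E.
Proof.
move=> ab; apply: (@le_trans _ _ (lebesgue_measure `[a, b])).
  apply: le_measure; last exact: subIsetl.
  - by rewrite inE; apply: measurableI; exact: measurable_itv.
  - by rewrite inE; exact: measurable_itv.
rewrite lebesgue_measure_itv /= lte_fin.
by case: ltgtP ab => //= ->; rewrite subrr.
Qed.

Lemma lebesgue_centered_itvI_le (c s rho : R) : 0 <= s -> 0 <= rho ->
  (lebesgue_measure (`[(c - s)%R, (c + s)%R] `&` `[(- rho)%R, rho]) <=
    (2 * Num.min s rho)%:E)%E.
Proof.
move=> s0 r0; case: (leP s rho) => sr.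
  apply: (le_trans (lebesgue_itvI_le (- rho) rho (c - s) (c + s) _)); first lra.
  by rewrite lee_fin; lra.
rewrite setIC; apply: (le_trans (lebesgue_itvI_le (c - s) (c + s) (- rho) rho _)).
  lra.
by rewrite lee_fin; lra.
Qed.

Lemma leb3_slab_box_le x s rho : 0 <= s -> 0 <= rho ->
  (@leb3 R (slab_box x s rho) <= ((2 * s) * (2 * Num.min s rho) ^+ 2)%:E)%E.
Proof.
move=> s0 r0.
have itv_side : (lebesgue_measure `[(x.1.1 - s)%R, (x.1.1 + s)%R] <= (2 * s)%:E)%E.
  rewrite lebesgue_measure_itv /= lte_fin.
  by case: ifP => _; rewrite lee_fin; [lra | rewrite mulr_ge0].
have slab_m (a b : R) : measurable (`[a, b] `&` `[(- rho)%R, rho]).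
  by apply: measurableI; exact: measurable_itv.
have prod3 := @product_measure1E _ _ _ _ R
  (lebesgue_measure \x lebesgue_measure)%E (@lebesgue_measure R).
have prod2 := @product_measure1E _ _ _ _ R (@lebesgue_measure R) (@lebesgue_measure R).
rewrite /leb3 /slab_box prod3; last 2 first.
- by apply: measurableX; [exact: measurable_itv | exact: slab_m].
- exact: slab_m.
rewrite [X in (X * _)%E]prod2; last 2 first.
- exact: measurable_itv.
- exact: slab_m.
have -> : ((2 * s) * (2 * Num.min s rho) ^+ 2)%:E =
    ((2 * s)%:E * (2 * Num.min s rho)%:E * (2 * Num.min s rho)%:E)%E.
  by rewrite -!EFinM; congr EFin; ring.
apply: lee_pmul.
- by apply: mule_ge0; exact: measure_ge0.
- exact: measure_ge0.
- apply: lee_pmul; [exact: measure_ge0 | exact: measure_ge0 | exact: itv_side |].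
  exact: lebesgue_centered_itvI_le.
- exact: lebesgue_centered_itvI_le.
Qed.

(* Comparison of a restricted integral with a full one, for nonnegative
   integrands; no measurability of f is needed (V_n is never shown measurable). *)
Lemma integral_le_integralT (disp : measure_display) (T : measurableType disp)
    (mu : {measure set T -> \bar R}) (D : set T) (f g : T -> \bar R) :
  (forall t, D t -> 0 <= f t)%E -> (forall t, 0 <= g t)%E ->
  (forall t, D t -> f t <= g t)%E -> (\int[mu]_(t in D) f t <= \int[mu]_t g t)%E.
Proof.
move=> f0 g0 fg; rewrite ge0_integralE // ge0_integralTE //.
apply: ereal_sup_le => _ [h hf <-]; exists h => //= t.
apply: (le_trans (hf t)); rewrite /patch; case: ifP; rewrite ?inE.
  by move=> Dt; exact: fg.
by move=> _; exact: g0.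
Qed.

Lemma dyadic_gt0 eps j : 0 < eps -> 0 < dyadic eps j.
Proof. by move=> e0; rewrite mulr_gt0 // exprn_gt0 // invr_gt0. Qed.

Lemma dyadic_shell eps d : 0 < d -> d < eps ->
  exists j, dyadic eps j.+1 <= d /\ d < dyadic eps j.
Proof.
move=> d0 de; have e0 : 0 < eps by apply: lt_trans de.
have below : exists m, dyadic eps m <= d.
  have hb := @archi_boundP R (eps / d) (ltW (divr_gt0 e0 d0)).
  set m := Num.Def.archi_bound _ in hb; exists m.
  have m_le : (m%:R : R) <= 2 ^+ m.
    by rewrite -natrX ler_nat; apply: ltnW; exact: ltn_expl.
  have := lt_le_trans hb m_le; rewrite ltr_pdivrMr // => em.
  by rewrite exprVn ler_pdivrMr ?exprn_gt0 // mulrC ltW.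
case: (ex_minnP below) => -[|j] hm hmin.
  by move: hm; rewrite expr0 mulr1 leNgt de.
exists j; split => //; rewrite ltNge; apply/negP => /hmin.
by rewrite ltnn.
Qed.

Lemma abs_le_norm3 (a b c : R) : `|a| <= Num.sqrt (a ^+ 2 + b ^+ 2 + c ^+ 2).
Proof.
by rewrite -sqrtr_sqr ler_wsqrtr // -addrA lerDl addr_ge0 // ?sqr_ge0.
Qed.

Lemma coord_le_dist3 x z :
  [/\ `|z.1.1 - x.1.1| <= dist3 z x, `|z.1.2 - x.1.2| <= dist3 z x
    & `|z.2 - x.2| <= dist3 z x].
Proof.
rewrite /dist3; split; first exact: abs_le_norm3.
  by rewrite (addrC ((z.1.1 - x.1.1) ^+ 2)); exact: abs_le_norm3.
by rewrite [X in Num.sqrt X]addrC addrA; exact: abs_le_norm3.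
Qed.

(* The j-th term of the dyadic majorant of v / |z - x| (for 0 <= v <= F):
   the height 2F/s_j on the slab box of half-side s_j = eps/2^j. *)
Definition dyadic_term eps x rho F (j : nat) z : \bar R :=
  ((F * 2 / dyadic eps j) * \1_(slab_box x (dyadic eps j) rho) z)%:E.

Lemma dyadic_term_ge0 eps x rho F j z : 0 < eps -> 0 <= F ->
  (0 <= dyadic_term eps x rho F j z)%E.
Proof.
move=> e0 F0; rewrite lee_fin mulr_ge0 //.
by rewrite divr_ge0 ?mulr_ge0 // ltW // dyadic_gt0.
Qed.

Lemma in_slab_box eps x z rho j : dist3 z x < dyadic eps j ->
  `|z.1.2| <= rho -> `|z.2| <= rho -> slab_box x (dyadic eps j) rho z.
Proof.
move=> hd h2 h3; have [c1 c2 c3] := coord_le_dist3 x z.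
have near_c (c t r : R) : `|t - c| < r -> `[c - r, c + r] t.
  by move=> h; rewrite /= in_itv /=; move: h; rewrite ltr_norml => /andP[? ?];
    apply/andP; split; lra.
have in_sym (t : R) : `|t| <= rho -> `[- rho, rho] t.
  by move=> h; rewrite /= in_itv /=; move: h; rewrite ler_norml.
split; first split.
- exact/near_c/(le_lt_trans c1 hd).
- by split; [exact/near_c/(le_lt_trans c2 hd) | exact: in_sym].
- by split; [exact/near_c/(le_lt_trans c3 hd) | exact: in_sym].
Qed.

Lemma kernel_le_dyadic eps x rho F z v : 0 < eps -> 0 <= v <= F ->
  (v != 0 -> `|z.1.2| <= rho /\ `|z.2| <= rho) -> dist3 z x < eps ->
  ((v / dist3 z x)%:E <= \sum_(j <oo) dyadic_term eps x rho F j z)%E.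
Proof.
move=> e0 /andP[v0 vF] hslab hz.
have F0 : 0 <= F := le_trans v0 vF.
have series_ge0 : (0 <= \sum_(j <oo) dyadic_term eps x rho F j z)%E.
  by apply: nneseries_ge0 => *; apply: dyadic_term_ge0.
have [->|vn0] := eqVneq v 0; first by rewrite mul0r.
have [d0|d0] := eqVneq (dist3 z x) 0; first by rewrite d0 invr0 mulr0.
have dpos : 0 < dist3 z x by rewrite lt_def d0 sqrtr_ge0.
have [j [shell_lo shell_hi]] := dyadic_shell _ _ dpos hz.
have [h2 h3] := hslab vn0.
apply: (@le_trans _ _ (dyadic_term eps x rho F j z)); last first.
  apply: le_trans (nneseries_lim_ge j.+1 _); last by move=> *; apply: dyadic_term_ge0.
  rewrite big_nat_recr //= lee_paddl //.
  by apply: sume_ge0 => *; apply: dyadic_term_ge0.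
have inbox : slab_box x (dyadic eps j) rho z by exact: in_slab_box.
rewrite /dyadic_term indicE mem_set // mulr1 lee_fin.
apply: (@le_trans _ _ (F / dist3 z x)); first by rewrite ler_wpM2r // invr_ge0 ltW.
rewrite -mulrA ler_wpM2l // -invf_div lef_pV2 ?posrE ?divr_gt0 ?dyadic_gt0 //.
by move: shell_lo; rewrite exprSr mulrA; lra.
Qed.

Local Open Scope ereal_scope.

Lemma integral_dyadic_term eps x rho F j : (0 < eps)%R -> (0 <= F)%R -> (0 <= rho)%R ->
  \int[@leb3 R]_z dyadic_term eps x rho F j z
    <= (16 * F * Num.min (dyadic eps j) rho ^+ 2)%:E.
Proof.
move=> e0 F0 r0; have s0 := dyadic_gt0 _ j e0.
have c0 : (0 <= F * 2 / dyadic eps j)%R by rewrite divr_ge0 ?mulr_ge0 // ltW.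
have box_m := slab_box_measurable x (dyadic eps j) rho.
rewrite /dyadic_term (@integralZl_indic _ _ _ (@leb3 R) setT measurableT
  (fun _ => slab_box x (dyadic eps j) rho)) //; last first.
  by move=> /lt_geF; rewrite c0.
rewrite integral_indic ?setIT //.
apply: le_trans (lee_pmul _ _ (lexx _) (leb3_slab_box_le x _ _ (ltW s0) r0)) _.
- by rewrite lee_fin.
- exact: measure_ge0.
rewrite -EFinM lee_fin le_eqVlt; apply/orP; left; apply/eqP; field.
by rewrite expf_neq0 ?gt_eqF //= invr_gt0.
Qed.

Lemma Kint_le_series eps x n F rho : (0 < eps)%R -> (0 <= F)%R -> (0 <= rho)%R ->
  (forall z, (dist3 z x < eps)%R -> Vn n z != 0%R ->
     (`|Vn n z| <= F /\ `|z.1.2| <= rho /\ `|z.2| <= rho)%R) ->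
  Kint eps x n <= \sum_(j <oo) (16 * F * Num.min (dyadic eps j) rho ^+ 2)%:E.
Proof.
move=> e0 F0 r0 hV.
have term_ge0 (j : nat) z : (0 <= dyadic_term eps x rho F j z)%E.
  exact: dyadic_term_ge0.
apply: (@le_trans _ _ (\int[@leb3 R]_z \sum_(j <oo) dyadic_term eps x rho F j z)).
  apply: integral_le_integralT.
  - by move=> z _; rewrite lee_fin divr_ge0 // sqrtr_ge0.
  - by move=> z; exact: nneseries_ge0.
  move=> z hz; apply: kernel_le_dyadic => //.
    have [V0|V0] := eqVneq (Vn n z) 0%R; first by rewrite V0 normr0 lexx F0.
    by have [VF _] := hV z hz V0; rewrite normr_ge0 VF.
  by rewrite normr_eq0 => /(hV z hz)[].
rewrite integral_nneseries //; last first.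
  move=> j; apply/measurable_realfun.measurable_EFinP.
  apply: measurable_realfun.measurable_funM.
    exact: measurable_cst.
  by apply: measurable_realfun.measurable_indic; exact: slab_box_measurable.
apply: lee_nneseries; first by move=> j _ _; exact: integral_ge0.
by move=> j _; exact: integral_dyadic_term.
Qed.

End DyadicKernel.

Section DyadicSums.
Context {R : realType}.
Implicit Types (eps rho F : R) (N m : nat).

Lemma dyadic_sqr_sum eps N k :
  \sum_(i < k) dyadic eps (N + i) ^+ 2 + 4/3 * dyadic eps (N + k) ^+ 2
  = 4/3 * dyadic eps N ^+ 2.
Proof.
elim: k => [|k IH]; first by rewrite big_ord0 add0r addn0.
rewrite big_ord_recr /= -IH addnS (exprS (2^-1) (N + k)).
by set q := (2^-1) ^+ (N + k); field.
Qed.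

(* Splitting the series at an arbitrary level N: the first N terms are at
   most rho^2 each and the remaining ones form a geometric series. *)
Lemma dyadic_min_sum_le eps rho N m : 0 <= eps -> 0 <= rho ->
  \sum_(0 <= j < m) Num.min (dyadic eps j) rho ^+ 2
    <= N%:R * rho ^+ 2 + 4/3 * dyadic eps N ^+ 2.
Proof.
move=> e0 r0.
have s0 j : 0 <= dyadic eps j by rewrite mulr_ge0 // exprn_ge0 // invr_ge0.
have le_rho j : Num.min (dyadic eps j) rho ^+ 2 <= rho ^+ 2.
  by have := s0 j; case: (leP (dyadic eps j) rho) => h h0 //; nra.
have le_s j : Num.min (dyadic eps j) rho ^+ 2 <= dyadic eps j ^+ 2.
  by have := s0 j; case: (leP (dyadic eps j) rho) => h h0 //; nra.
have head_le k : (k <= N)%N ->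
    \sum_(0 <= j < k) Num.min (dyadic eps j) rho ^+ 2 <= N%:R * rho ^+ 2.
  move=> kN; apply: (le_trans (ler_sum _ (fun j _ => le_rho j))).
  rewrite sumr_const_nat subn0 -[_ *+ k]mulr_natl.
  by apply: ler_wpM2r; rewrite ?sqr_ge0 ?ler_nat.
have tail0 : 0 <= 4/3 * dyadic eps N ^+ 2 by rewrite mulr_ge0 // sqr_ge0.
case: (leqP m N) => hm; first by apply: le_trans (head_le _ hm) _; rewrite lerDl.
rewrite (@big_cat_nat _ _ _ N 0 m _ _ (leq0n N) (ltnW hm)) /=.
apply: lerD; first exact: head_le.
apply: (le_trans (ler_sum _ (fun j _ => le_s j))).
rewrite -{1}(add0n N) big_addn big_mkord -(dyadic_sqr_sum eps N (m - N)).
under eq_bigr do rewrite addnC.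
by rewrite lerDl mulr_ge0 // sqr_ge0.
Qed.

Lemma dyadic_min_series_le eps rho F N : 0 <= eps -> 0 <= rho -> 0 <= F ->
  (\sum_(j <oo) (16 * F * Num.min (dyadic eps j) rho ^+ 2)%:E
    <= (16 * F * (N%:R * rho ^+ 2 + 4/3 * dyadic eps N ^+ 2))%:E)%E.
Proof.
move=> e0 r0 F0; apply: lime_le.
  apply: is_cvg_nneseries => j _ _.
  by rewrite lee_fin; apply: mulr_ge0; rewrite ?sqr_ge0 ?mulr_ge0.
apply: nearW => m; rewrite sumEFin lee_fin -mulr_sumr.
by apply: ler_wpM2l; [rewrite mulr_ge0 | exact: dyadic_min_sum_le].
Qed.

End DyadicSums.

Section Logarithms.
Context {R : realType}.
Implicit Types (a eps y : R).

(* ln 2 >= 1/2, from exp(1/2) <= 1/(1 - 1/2) = 2. *)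
Lemma ln2_ge_half : 2^-1 <= ln (2 : R).
Proof.
have h : 2^-1 <= expR (- 2^-1 : R) by have := expR_ge1Dx (- 2^-1 : R); lra.
have hm := expRxMexpNx_1 (2^-1 : R).
have hp := expR_gt0 (2^-1 : R).
have he : expR (2^-1 : R) <= 2 by nra.
by rewrite -[X in X <= _](expRK (2^-1)) ler_ln ?posrE ?expR_gt0.
Qed.

(* For y <= 1/16 one has -ln y >= 4 ln 2 >= 2, hence ln(-ln y) >= ln 2 >= 1/2. *)
Lemma loglog_ge y : 0 < y -> y <= 16^-1 -> 2 <= - ln y /\ 2^-1 <= ln (- ln y).
Proof.
move=> y0 y16.
have ln16 : ln (16^-1 : R) = - (ln (2 : R) *+ 4).
  by rewrite lnV ?posrE // -lnXn // -natrX.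
have lny : ln y <= ln (16^-1 : R) by rewrite ler_ln ?posrE.
have ln2 := ln2_ge_half.
have L2 : 2 <= - ln y.
  by rewrite ln16 mulrS !mulrSr mulr0n add0r in lny; lra.
split => //; apply: le_trans ln2 _; rewrite ler_ln ?posrE //; lra.
Qed.

(* M(a) := -ln(min(2a, 1/20)) dominates |ln u| for u in (0, min(2a, 1/20)]. *)
Definition logscale a : R := - ln (Num.min (2 * a) 20^-1).

(* F(a) := 2 / (a M(a) ln M(a)) bounds f(u) for u in [a/2, min(2a, 1/20)]. *)
Definition peak a : R := 2 / (a * logscale a * ln (logscale a)).

Lemma min2a_gt0 a : 0 < a -> 0 < Num.min (2 * a) 20^-1.
Proof. by move=> a0; rewrite lt_min mulr_gt0 //= invr_gt0. Qed.

Lemma min2a_le a : Num.min (2 * a) 20^-1 <= 16^-1.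
Proof. by rewrite ge_min; apply/orP; right; rewrite lef_pV2 ?posrE // ler_nat. Qed.

Lemma logscale_ge a : 0 < a -> 2 <= logscale a /\ 2^-1 <= ln (logscale a).
Proof. by move=> a0; apply: loglog_ge; [exact: min2a_gt0 | exact: min2a_le]. Qed.

Lemma peak_ge0 a : 0 < a -> 0 <= peak a.
Proof.
move=> a0; have [M2 lnM] := logscale_ge _ a0.
by rewrite divr_ge0 // !mulr_ge0 ?(ltW a0) //; lra.
Qed.

End Logarithms.

Section ScaleChoice.
Context {R : realType}.
Implicit Types (a eps : R) (N : nat).

Definition kernel_bound eps : R := 86 * eps + 139 / ln (- ln eps).

(* Wide slab (eps <= 2a): already the level N = 0 gives a bound O(eps). *)
Lemma estimate_wide a eps : 0 < a -> 0 < eps -> eps <= 2 * a ->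
  16 * peak a * (4/3 * eps ^+ 2) <= 86 * eps.
Proof.
move=> a0 e0 ha; have [M2 lnM] := logscale_ge _ a0.
rewrite /peak; set M := logscale a in M2 lnM *.
have MlnM : 1 <= M * ln M by nra.
have -> : 16 * (2 / (a * M * ln M)) * (4 / 3 * eps ^+ 2)
    = (128/3 * eps ^+ 2) / (a * (M * ln M)).
  by field; rewrite !gt_eqF //; nra.
rewrite ler_pdivrMr; last by apply: mulr_gt0 => //; nra.
have h1 : eps ^+ 2 <= 2 * a * eps by rewrite expr2; nra.
have h2 : a * eps <= a * eps * (M * ln M) by rewrite ler_peMr // mulr_ge0 // ltW.
nra.
Qed.

(* Thin slab (2a < eps <= 1): some level N has (eps/2^N)^2 <= 2a, and the
   first such level is at most 1 + M(a), since 4^-N roughly equals 2a. *)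
Lemma thin_level a eps : 0 < a -> 2 * a < eps -> eps <= 1 ->
  exists N, dyadic eps N ^+ 2 <= 2 * a /\ N%:R <= 1 + logscale a.
Proof.
move=> a0 ha e1; have [M2 _] := logscale_ge _ a0.
have e0 : 0 < eps by lra.
have a2 : 0 <= 2 * a by rewrite mulr_ge0 // ltW.
have sq := sqr_sqrtr a2; set r := Num.sqrt (2 * a) in sq.
have r0 : 0 < r by rewrite sqrtr_gt0 mulr_gt0.
case: (leP eps r) => hr.
  exists 0%N; rewrite expr0 mulr1; split; last lra.
  by rewrite -sq ler_sqr ?nnegrE ?(ltW r0) //; lra.
have [j [lo hi]] := dyadic_shell _ _ r0 hr.
have w0 : 0 < (2^-1 : R) ^+ j by rewrite exprn_gt0 // invr_gt0.
have s1 : 0 <= dyadic eps j.+1 by rewrite mulr_ge0 ?exprn_ge0 ?invr_ge0 ?ltW.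
exists j.+1; split; first by rewrite -sq; move: lo s1; set u := dyadic _ _; nra.
have small : 2 * a < (2^-1) ^+ (j * 2).
  rewrite exprM -sq !expr2; move: hi w0; set w := (2^-1 : R) ^+ j => hi w0.
  have h3 : r * r < (eps * w) * (eps * w) by apply: ltr_pM; rewrite ?ltW.
  have h4 : (eps * w) * (eps * w) <= w * w.
    by rewrite mulrACA ler_piMl ?mulr_ge0 ?(ltW w0) //; nra.
  lra.
have hl : ln (2 * a) < ln ((2^-1 : R) ^+ (j * 2)).
  by rewrite ltr_ln ?posrE // ?mulr_gt0 // exprn_gt0 // invr_gt0.
rewrite lnXn ?invr_gt0 // lnV ?posrE // -[_ *+ (j * 2)]mulr_natr natrM in hl.
have hm : ln (Num.min (2 * a) 20^-1) <= ln (2 * a).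
  by rewrite ler_ln ?posrE ?min2a_gt0 ?mulr_gt0 // ge_min lexx.
have ln2 : 2^-1 <= ln (2 : R) := ln2_ge_half.
have j0 : (0 : R) <= j%:R by [].
by rewrite -natr1 /logscale; nra.
Qed.

(* Thin slab: with the level N of thin_level the bound is O(1/ln M(a)),
   and M(a) >= -ln eps. *)
Lemma estimate_thin a eps N : 0 < a -> 0 < eps -> eps <= 16^-1 -> 2 * a < eps ->
  dyadic eps N ^+ 2 <= 2 * a -> N%:R <= 1 + logscale a ->
  16 * peak a * (N%:R * (2 * a) + 4/3 * dyadic eps N ^+ 2) <= 139 / ln (- ln eps).
Proof.
move=> a0 e0 e16 ha hN1 hN2.
have [L2 lnL] := loglog_ge _ e0 e16.
have [M2 lnM] := logscale_ge _ a0.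
rewrite /peak; set M := logscale a in M2 lnM hN2 *.
have ML : - ln eps <= M.
  rewrite /M /logscale lerN2 ler_ln ?posrE ?min2a_gt0 //.
  by rewrite ge_min; apply/orP; left; exact: ltW.
have lnML : ln (- ln eps) <= ln M by rewrite ler_ln ?posrE //; lra.
have sum_le : N%:R * (2 * a) + 4 / 3 * dyadic eps N ^+ 2 <= 13/3 * a * M.
  by have : (0 : R) <= N%:R by []; nra.
have -> : 16 * (2 / (a * M * ln M)) * (N%:R * (2 * a) + 4 / 3 * dyadic eps N ^+ 2)
   = 32 * (N%:R * (2 * a) + 4 / 3 * dyadic eps N ^+ 2) / (a * M * ln M).
  by field; rewrite !gt_eqF //; lra.
apply: (@le_trans _ _ (139 / ln M)).
  rewrite ler_pdivrMr; last by rewrite !mulr_gt0 //; lra.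
  have -> : 139 / ln M * (a * M * ln M) = 139 * a * M by field; rewrite gt_eqF //; lra.
  have aM : 0 < a * M by rewrite mulr_gt0 //; lra.
  nra.
by rewrite ler_pM2l // lef_pV2 ?posrE //; lra.
Qed.

Lemma scale_estimate a eps : 0 < a -> 0 < eps -> eps <= 16^-1 ->
  exists N, 16 * peak a * (N%:R * Num.sqrt (2 * a) ^+ 2 + 4/3 * dyadic eps N ^+ 2)
    <= kernel_bound eps.
Proof.
move=> a0 e0 e16; have [_ lnL] := loglog_ge _ e0 e16.
have tail0 : 0 <= 139 / ln (- ln eps) by rewrite divr_ge0 // (le_trans _ lnL).
rewrite sqr_sqrtr ?mulr_ge0 ?(ltW a0) // /kernel_bound.
case: (ltP (2 * a) eps) => ha.
  have [N [hN1 hN2]] := thin_level _ _ a0 ha ltac:(lra).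
  by exists N; apply: le_trans (estimate_thin _ _ _ a0 e0 e16 ha hN1 hN2) _; lra.
exists 0%N; rewrite expr0 mulr1 mul0r add0r.
by apply: le_trans (estimate_wide _ _ a0 e0 ha) _; lra.
Qed.

End ScaleChoice.

Section Potential.
Context {R : realType}.
Implicit Types (eps a u : R) (x z : R * R * R) (n k : nat).

(* The cylinders C_{k,r} are pairwise disjoint: their axial ranges are. *)
Lemma cyl_index_unique k i (t : R) : k%:R <= t <= k%:R + 4^-1 ->
  i%:R <= t <= i%:R + 4^-1 -> i = k.
Proof.
move=> /andP[h1 h2] /andP[h3 h4].
case: (ltngtP i k) => // hik; exfalso.
  have : i%:R + 1 <= (k%:R : R) by rewrite natr1 ler_nat.
  lra.
have : k%:R + 1 <= (i%:R : R) by rewrite natr1 ler_nat.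
lra.
Qed.

Lemma Vn_support n z : Vn n z != 0 ->
  exists k, [/\ (1 <= k <= n)%N, cyl k (Num.sqrt (k%:R / (25 * n%:R))) z &
     Vn n z = f_fun (z.1.1 / (25 * n%:R))].
Proof.
move=> V0.
case: (pselect (exists k, (1 <= k <= n)%N /\ cyl k (Num.sqrt (k%:R / (25 * n%:R))) z)).
  move=> [k [hk hc]]; exists k; split => //.
  rewrite /Vn (bigD1_seq k) /= ?iota_uniq ?mem_index_iota ?ltnS //.
  rewrite indicE mem_set // big1 ?addr0 ?mulr1 // => i ik.
  rewrite indicE memNset // => hi.
  move: hc hi => [hc1 _] [hi1 _].
  by move: ik; rewrite (cyl_index_unique _ _ _ hc1 hi1) eqxx.
move=> nex; move: V0; rewrite /Vn big_nat_cond big1 ?mulr0 ?eqxx //.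
move=> k /andP[/andP[k1 kn] _]; rewrite indicE memNset // => hc.
by apply: nex; exists k; split => //; rewrite k1 -ltnS.
Qed.

Lemma disc_coord_le (b c t : R) : b ^+ 2 + c ^+ 2 <= t ->
  `|b| <= Num.sqrt t /\ `|c| <= Num.sqrt t.
Proof.
move=> h; rewrite -(sqrtr_sqr b) -(sqrtr_sqr c).
split; apply: ler_wsqrtr; [have := sqr_ge0 c | have := sqr_ge0 b]; lra.
Qed.

Lemma f_fun_le_peak a u : 0 < a -> a / 2 <= u -> u <= Num.min (2 * a) 20^-1 ->
  0 <= f_fun u <= peak a.
Proof.
move=> a0 lo hi; have [M2 lnM] := logscale_ge _ a0.
have u0 : 0 < u by lra.
have lnu0 : ln u < 0 by rewrite ln_lt0 // u0 /=; have := min2a_le a; lra.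
have Mu : logscale a <= `|ln u|.
  by rewrite ltr0_norm // /logscale lerN2 ler_ln ?posrE ?min2a_gt0.
have lnlnu : ln (logscale a) <= ln `|ln u| by rewrite ler_ln ?posrE //; lra.
rewrite /f_fun /peak; set M := logscale a in M2 lnM Mu lnlnu *.
rewrite invr_ge0 !mulr_ge0 ?normr_ge0 //=; [|lra|lra].
have -> : 2 / (a * M * ln M) = (a / 2 * M * ln M)^-1.
  by field; rewrite !gt_eqF //; lra.
rewrite lef_pV2 ?posrE ?mulr_gt0 ?divr_gt0 //; try lra.
by apply: ler_pM; [rewrite mulr_ge0 //; lra | lra | apply: ler_pM => //; lra | ].
Qed.

Lemma cyl_scale n k x z : (1 <= k <= n)%N ->
  k%:R <= z.1.1 <= k%:R + 4^-1 -> `|z.1.1 - x.1.1| < 2^-1 ->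
  let u := z.1.1 / (25 * n%:R) in let a := x.1.1 / (25 * n%:R) in
  [/\ k%:R / (25 * n%:R) <= u, a / 2 <= u, u <= 2 * a & u <= 20^-1].
Proof.
move=> /andP[k1 kn] /andP[hk1 hk2]; rewrite ltr_norml => /andP[c1 c2] u a.
have n0 : (0 : R) < 25 * n%:R by rewrite mulr_gt0 // ltr0n (leq_trans k1 kn).
have k1R : (1 : R) <= k%:R by rewrite ler1n.
have knR : (k%:R : R) <= n%:R by rewrite ler_nat.
rewrite /u /a; split.
- by rewrite ler_pM2r ?invr_gt0.
- by rewrite -mulrA [_^-1 * _]mulrC mulrA ler_pM2r ?invr_gt0 //; lra.
- by rewrite mulrA ler_pM2r ?invr_gt0 //; lra.
rewrite ler_pdivrMr // -[X in _ <= X](mulKf (_ : (20 : R) != 0)) // mulrA.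
have : n%:R * 4 + 1 <= (5 : R) * n%:R by lra.
lra.
Qed.

Lemma Vn_near eps x n z : eps <= 2^-1 -> dist3 z x < eps ->
  Vn n z != 0 -> let a := x.1.1 / (25 * n%:R) in
  [/\ 0 < a, `|Vn n z| <= peak a, `|z.1.2| <= Num.sqrt (2 * a)
    & `|z.2| <= Num.sqrt (2 * a)].
Proof.
move=> e2 hz V0 a.
have [k [kn [hk hdisc] ->]] := Vn_support _ _ V0.
have [c1 _ _] := coord_le_dist3 x z.
have [r_le lo hi small] := cyl_scale _ _ x z kn hk (lt_le_trans (le_lt_trans c1 hz) e2).
have a0 : 0 < a.
  have k0 : (0 : R) < k%:R / (25 * n%:R).
    by case/andP: kn => k1 kn; rewrite divr_gt0 ?mulr_gt0 ?ltr0n // (leq_trans k1 kn).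
  rewrite /a; lra.
have [disc2 disc3] : `|z.1.2| <= Num.sqrt (2 * a) /\ `|z.2| <= Num.sqrt (2 * a).
  apply: disc_coord_le; apply: le_trans hdisc _.
  rewrite sqr_sqrtr ?divr_ge0 ?mulr_ge0 //; exact: le_trans r_le hi.
have /andP[f0 fle] : 0 <= f_fun (z.1.1 / (25 * n%:R)) <= peak a.
  by apply: f_fun_le_peak => //; rewrite le_min hi small.
by split => //; rewrite ger0_norm.
Qed.

End Potential.

Section UniformBound.
Context {R : realType}.
Implicit Types (eps : R) (x : R * R * R) (n : nat).

Lemma Kint_vanish eps x n : 0 < eps -> (forall z, dist3 z x < eps -> Vn n z = 0) ->
  (Kint eps x n <= 0)%E.
Proof.
move=> e0 hV.
apply: le_trans (Kint_le_series _ _ _ _ _ e0 (lexx 0) (lexx 0) _) _.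
  by move=> z hz; rewrite hV ?eqxx.
apply: le_trans (dyadic_min_series_le _ _ _ 0 (ltW e0) (lexx 0) (lexx 0)) _.
by rewrite !mulr0 mul0r.
Qed.

Lemma Kint_le_kernel_bound eps x n : 0 < eps -> eps <= 16^-1 ->
  (Kint eps x n <= (kernel_bound eps)%:E)%E.
Proof.
move=> e0 e16; have [_ lnL] := loglog_ge _ e0 e16.
have tail0 : 0 <= 139 / ln (- ln eps).
  by rewrite divr_ge0 //; apply: le_trans lnL; rewrite invr_ge0.
have B0 : 0 <= kernel_bound eps by rewrite addr_ge0 // mulr_ge0 // ltW.
have e2 : eps <= 2^-1 by lra.
set a := x.1.1 / (25 * n%:R).
case: (ltP 0 a) => a0; last first.
  apply: le_trans (Kint_vanish _ _ _ e0 _) _; last by rewrite lee_fin.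
  move=> z hz; apply/eqP; apply/negP => /negP V0.
  have [a0' _ _ _] := Vn_near _ _ _ _ e2 hz V0.
  by move: a0; rewrite leNgt a0'.
have [N hN] := scale_estimate _ _ a0 e0 e16.
apply: le_trans (Kint_le_series _ _ _ _ _ e0 (peak_ge0 _ a0) (sqrtr_ge0 (2 * a)) _) _.
  move=> z hz V0; have [_ hV h2 h3] := Vn_near _ _ _ _ e2 hz V0.
  by split.
apply: le_trans (dyadic_min_series_le _ _ _ N (ltW e0) (sqrtr_ge0 _) (peak_ge0 _ a0)) _.
by rewrite lee_fin.
Qed.

Lemma kernel_bound_cvg : kernel_bound @ (0 : R)^'+ --> 0.
Proof.
apply/cvgrPdist_le => d d0.
set c := 278 / d.
have c0 : 0 < c by rewrite divr_gt0.
set e_max := Num.min (16^-1 : R) (Num.min (d / 172) (expR (- expR c))).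
have e_max0 : 0 < e_max by rewrite !lt_min invr_gt0 ltr0n /= divr_gt0 //= expR_gt0.
near=> e.
have he : 0 < e by near: e; exact: nbhs_right_gt.
have he1 : e < e_max by near: e; exact: nbhs_right_lt.
move: he1; rewrite !lt_min => /and3P [h16 hd hx].
have [_ hl] := loglog_ge _ he (ltW h16).
have hl0 : 0 < ln (- ln e) by apply: lt_le_trans hl; rewrite invr_gt0.
have hlc : c < ln (- ln e).
  have h1 : ln e < - expR c.
    by rewrite -[X in _ < X](expRK) ltr_ln ?posrE ?expR_gt0.
  rewrite ltrNr in h1.
  rewrite -[X in X < _](expRK c) ltr_ln ?posrE ?expR_gt0 //.
  by apply: lt_trans h1; rewrite expR_gt0.
have h2 : 139 / ln (- ln e) <= d / 2.
  rewrite ler_pdivrMr // -ler_pdivrMl ?divr_gt0 //.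
  apply: ltW; apply: le_lt_trans hlc; rewrite le_eqVlt; apply/orP; left.
  by apply/eqP; rewrite /c; field; rewrite gt_eqF.
have h3 : 0 <= 139 / ln (- ln e) by rewrite divr_ge0 // ltW.
rewrite sub0r normrN /kernel_bound ger0_norm; last by rewrite addr_ge0 // mulr_ge0 // ltW.
lra.
Unshelve. all: by end_near.
Qed.

End UniformBound.

Theorem corollary4p2 (R : realType) :
  Ksup eps @[eps --> (0 : R)^'+] --> (0 : \bar R).
Proof.
apply: (@squeeze_cvge _ _ _ _ (fun _ => 0%E) _ (fun e => (kernel_bound e)%:E)).
- near=> e.
  have he : 0 < e by near: e; exact: nbhs_right_gt.
  have h16 : e < 16^-1 by near: e; apply: nbhs_right_lt; rewrite invr_gt0.
  apply/andP; split.
    apply: (@le_trans _ _ (Kint e (0, 0, 0) 0%N)).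
      by apply: integral_ge0 => z _; rewrite lee_fin divr_ge0 // sqrtr_ge0.
    by apply: ereal_sup_ubound; exists (0, 0, 0), 0%N.
  apply: ge_ereal_sup => _ [x [n ->]].
  exact: Kint_le_kernel_bound he (ltW h16).
- exact: cvg_cst.
- by apply/fine_cvgP; split; [exact: nearW | exact: kernel_bound_cvg].
Unshelve. all: by end_near.
Qed.
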